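(* $\mathsf{LC}$ is $\mathsf{TNNIL}$-conservative over $\mathsf{LLe}^+$: for every $A\in\mathsf{TNNIL}$, if $\mathsf{LC}\vdash A$ then $\mathsf{LLe}^+\vdash A$.
   Context: Modal language: propositional variables, $\bot$, $\wedge,\vee,\to$, $\Box$; atomic = variables and $\bot$; $\boxdot A:=A\wedge\Box A$. $\mathsf{iK4}$: intuitionistic propositional logic in the modal language plus $\Box(A\to B)\to(\Box A\to\Box B)$ and $\Box A\to\Box\Box A$, closed under modus ponens and necessitation; $\mathsf{iGL}$: $\mathsf{iK4}$ plus Löb's axiom $\Box(\Box A\to A)\to\Box A$. $\mathsf{LC}:=\mathsf{iGL}+\{A\to\Box A\}$ (completeness principle for all $A$). $\mathsf{NOI}$: propositions in which every $\to$ lies in the scope of a $\Box$. Leivant's translation: $A^l=A$ for atomic/boxed $A$; $(A\wedge B)^l=A^l\wedge B^l$; $(A\vee B)^l=\boxdot A^l\vee\boxdot B^l$; $(A\to B)^l=A\to B^l$ if $A\in\mathsf{NOI}$, else $A\to B$. $\mathsf{LLe}^+:=\mathsf{iGL}+\{\Box A\to\Box A^l\}+\{p\to\Box p: p\text{ atomic}\}$. $\mathsf{TNNIL}$: smallest class containing atomic propositions, closed under $\wedge,\vee,\Box$, and containing $A\to B$ whenever $A,B\in\mathsf{TNNIL}$ and $A\in\mathsf{NOI}$. *)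

Inductive form : Type :=
| Var : nat -> form
| Bot : form
| And : form -> form -> form
| Or  : form -> form -> form
| Imp : form -> form -> form
| Box : form -> form.

Definition atomic (A : form) : Prop :=
  match A with Var _ | Bot => True | _ => False end.

Definition boxdot (A : form) : form := And A (Box A).

Fixpoint noib (A : form) : bool :=
  match A with
  | Var _ | Bot => true
  | And B C | Or B C => andb (noib B) (noib C)
  | Imp _ _ => false
  | Box _ => true
  end.

Definition NOI (A : form) : Prop := noib A = true.

Fixpoint leivant (A : form) : form :=
  match A with
  | Var n => Var n
  | Bot => Bot
  | Box B => Box B
  | And B C => And (leivant B) (leivant C)
  | Or B C => Or (boxdot (leivant B)) (boxdot (leivant C))
  | Imp B C => if noib B then Imp B (leivant C) else Imp B C
  end.

Inductive TNNIL : form -> Prop :=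
| TNNIL_var : forall n, TNNIL (Var n)
| TNNIL_bot : TNNIL Bot
| TNNIL_and : forall A B, TNNIL A -> TNNIL B -> TNNIL (And A B)
| TNNIL_or  : forall A B, TNNIL A -> TNNIL B -> TNNIL (Or A B)
| TNNIL_box : forall A, TNNIL A -> TNNIL (Box A)
| TNNIL_imp : forall A B, TNNIL A -> TNNIL B -> NOI A -> TNNIL (Imp A B).

Inductive iGL_prf (X : form -> Prop) : form -> Prop :=
| ax_k  : forall A B, iGL_prf X (Imp A (Imp B A))
| ax_s  : forall A B C,
    iGL_prf X (Imp (Imp A (Imp B C)) (Imp (Imp A B) (Imp A C)))
| ax_and1 : forall A B, iGL_prf X (Imp (And A B) A)
| ax_and2 : forall A B, iGL_prf X (Imp (And A B) B)
| ax_andI : forall A B, iGL_prf X (Imp A (Imp B (And A B)))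
| ax_or1 : forall A B, iGL_prf X (Imp A (Or A B))
| ax_or2 : forall A B, iGL_prf X (Imp B (Or A B))
| ax_orE : forall A B C,
    iGL_prf X (Imp (Imp A C) (Imp (Imp B C) (Imp (Or A B) C)))
| ax_efq : forall A, iGL_prf X (Imp Bot A)
| ax_K : forall A B, iGL_prf X (Imp (Box (Imp A B)) (Imp (Box A) (Box B)))
| ax_4 : forall A, iGL_prf X (Imp (Box A) (Box (Box A)))
| ax_L : forall A, iGL_prf X (Imp (Box (Imp (Box A) A)) (Box A))
| ax_extra : forall A, X A -> iGL_prf X A
| r_mp : forall A B, iGL_prf X (Imp A B) -> iGL_prf X A -> iGL_prf X B
| r_nec : forall A, iGL_prf X A -> iGL_prf X (Box A).

Definition iGL_thm (A : form) : Prop := iGL_prf (fun _ => False) A.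

Definition LC_ax (A : form) : Prop := exists B, A = Imp B (Box B).
Definition LC_thm (A : form) : Prop := iGL_prf LC_ax A.

Definition LLe_plus_ax (A : form) : Prop :=
  (exists B, A = Imp (Box B) (Box (leivant B))) \/
  (exists p, atomic p /\ A = Imp p (Box p)).
Definition LLe_plus_thm (A : form) : Prop := iGL_prf LLe_plus_ax A.

From Stdlib Require Import List Bool.
Import ListNotations.

(* Let A^b be A with every implication B -> C replaced by its boxdot
   (B^b -> C^b) /\ Box (B^b -> C^b).  Over any extension of iGL in which
   atoms are persistent (p -> Box p), every translated formula is persistent,
   so the completeness principle A -> Box A is valid under the translation and
   LC |- A gives LLe+ |- A^b.  For A in TNNIL the translation is then undone,
   A^b -> A, by induction on A, simultaneously with boxdot A^l -> A^b and,
   for A in NOI, A -> A^b.  The Leivant axiom Box A -> Box A^l is exactly what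
   makes the boxed case Box A -> Box A^b go through. *)

Inductive derivable (X : form -> Prop) (G : list form) : form -> Prop :=
| der_thm : forall A, iGL_prf X A -> derivable X G A
| der_hyp : forall A, In A G -> derivable X G A
| der_mp : forall A B, derivable X G (Imp A B) -> derivable X G A -> derivable X G B.

Section Derivable.

Variable X : form -> Prop.
Local Notation der := (derivable X).

Lemma iGL_imp_refl A : iGL_prf X (Imp A A).
Proof.
  exact (r_mp _ _ _ (r_mp _ _ _ (ax_s _ A (Imp A A) A) (ax_k _ A (Imp A A)))
              (ax_k _ A A)).
Qed.

Lemma der_deduction G A B : der (A :: G) B -> der G (Imp A B).
Proof.
  induction 1 as [C HC | C [<- | HC] | C D _ IHCD _ IHC].
  - apply der_mp with C; [apply der_thm, ax_k | now apply der_thm].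
  - apply der_thm, iGL_imp_refl.
  - apply der_mp with C; [apply der_thm, ax_k | now apply der_hyp].
  - apply der_mp with (Imp A C); [|exact IHC].
    apply der_mp with (Imp A (Imp C D)); [apply der_thm, ax_s | exact IHCD].
Qed.

Lemma der_cut G' G A : der G' A -> (forall x, In x G' -> der G x) -> der G A.
Proof.
  intros H HG; induction H.
  - now apply der_thm.
  - auto.
  - eapply der_mp; eauto.
Qed.

Lemma der_nil A : der [] A -> iGL_prf X A.
Proof.
  induction 1 as [| C [] | C D _ IHCD _ IHC]; [assumption | exact (r_mp _ _ _ IHCD IHC)].
Qed.

Lemma der_single_imp A B : der [A] B -> iGL_prf X (Imp A B).
Proof. intro H; apply der_nil, der_deduction, H. Qed.

Lemma der_app G A B : iGL_prf X (Imp A B) -> der G A -> der G B.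
Proof. intros HAB HA; apply der_mp with A; [now apply der_thm | exact HA]. Qed.

Lemma der_box_map G A : der G A -> der (map Box G) (Box A).
Proof.
  revert A; induction G as [|x G IH]; intros A H.
  - apply der_thm, r_nec, der_nil, H.
  - apply der_deduction, IH in H.
    apply der_mp with (Box x); [|apply der_hyp; left; reflexivity].
    apply der_mp with (Box (Imp x A)); [apply der_thm, ax_K|].
    apply (der_cut _ _ _ H); intros y Hy; apply der_hyp; right; exact Hy.
Qed.

Lemma der_box L G A :
  der L A -> (forall x, In x L -> der G (Box x)) -> der G (Box A).
Proof.
  intros H HL; apply (der_cut _ _ _ (der_box_map _ _ H)).
  intros y Hy; apply in_map_iff in Hy as [x [<- Hx]]; auto.
Qed.

Lemma der_andl G A B : der G (And A B) -> der G A.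
Proof. apply der_app, ax_and1. Qed.

Lemma der_andr G A B : der G (And A B) -> der G B.
Proof. apply der_app, ax_and2. Qed.

Lemma der_andI G A B : der G A -> der G B -> der G (And A B).
Proof.
  intros HA HB; apply der_mp with B; [|exact HB].
  apply der_mp with A; [apply der_thm, ax_andI | exact HA].
Qed.

Lemma der_orl G A B : der G A -> der G (Or A B).
Proof. apply der_app, ax_or1. Qed.

Lemma der_orr G A B : der G B -> der G (Or A B).
Proof. apply der_app, ax_or2. Qed.

Lemma der_orE G A B C :
  der G (Or A B) -> der (A :: G) C -> der (B :: G) C -> der G C.
Proof.
  intros H HA HB; apply der_deduction in HA, HB.
  apply der_mp with (Or A B); [|exact H].
  apply der_mp with (Imp B C); [|exact HB].
  apply der_mp with (Imp A C); [apply der_thm, ax_orE | exact HA].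
Qed.

Lemma der_efq G A : der G Bot -> der G A.
Proof. apply der_app, ax_efq. Qed.

Lemma der_box_mono G A B : iGL_prf X (Imp A B) -> der G (Box A) -> der G (Box B).
Proof.
  intros HAB HA; apply (der_box [A]).
  - apply (der_app _ _ _ HAB), der_hyp; left; reflexivity.
  - intros x [<- | []]; exact HA.
Qed.

Lemma der_box_boxdot G A : der G (Box A) -> der G (Box (boxdot A)).
Proof.
  intro H; apply (der_box [A; Box A]).
  - apply der_andI; apply der_hyp; simpl; auto.
  - intros x [<- | [<- | []]]; [exact H | exact (der_app _ _ _ (ax_4 _ _) H)].
Qed.

End Derivable.

Ltac in_ctx := apply der_hyp; simpl; repeat (first [left; reflexivity | right]).

Fixpoint boxdot_tr (A : form) : form :=
  match A with
  | Var n => Var n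
  | Bot => Bot
  | And B C => And (boxdot_tr B) (boxdot_tr C)
  | Or B C => Or (boxdot_tr B) (boxdot_tr C)
  | Imp B C => boxdot (Imp (boxdot_tr B) (boxdot_tr C))
  | Box B => Box (boxdot_tr B)
  end.

Section Translation.

Variable X : form -> Prop.
Local Notation der := (derivable X).
Local Notation tr := boxdot_tr.

Hypothesis atomic_persistent : forall p, atomic p -> iGL_prf X (Imp p (Box p)).

Lemma boxdot_tr_persistent A : iGL_prf X (Imp (tr A) (Box (tr A))).
Proof.
  induction A as [n | | A1 IH1 A2 IH2 | A1 IH1 A2 IH2 | A1 _ A2 _ | A1 _]; simpl.
  - now apply atomic_persistent.
  - now apply atomic_persistent.
  - apply der_single_imp, (der_box _ [tr A1; tr A2]).
    + apply der_andI; in_ctx.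
    + intros x [<- | [<- | []]].
      * apply (der_app _ _ _ _ IH1), (der_andl _ _ _ (tr A2)); in_ctx.
      * apply (der_app _ _ _ _ IH2), (der_andr _ _ (tr A1)); in_ctx.
  - apply der_single_imp, (der_orE _ _ (tr A1) (tr A2)); [in_ctx | |].
    + apply (der_box_mono _ _ (tr A1)); [apply ax_or1|].
      apply (der_app _ _ _ _ IH1); in_ctx.
    + apply (der_box_mono _ _ (tr A2)); [apply ax_or2|].
      apply (der_app _ _ _ _ IH2); in_ctx.
  - apply der_single_imp, der_box_boxdot, (der_andr _ _ (Imp (tr A1) (tr A2))); in_ctx.
  - apply ax_4.
Qed.

(* Persistence of the translated context is what lets the implication be boxed. *)
Lemma der_tr_imp_intro L A B :
  der (map tr (A :: L)) (tr B) -> der (map tr L) (tr (Imp A B)).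
Proof.
  intro H; simpl in H; apply der_deduction in H.
  apply der_andI; [exact H|].
  apply (der_box _ (map tr L)); [exact H|].
  intros x Hx; apply in_map_iff in Hx as [y [<- Hy]].
  apply (der_app _ _ _ _ (boxdot_tr_persistent y)), der_hyp, in_map, Hy.
Qed.

Lemma der_tr_imp_elim G A B :
  der G (tr (Imp A B)) -> der G (tr A) -> der G (tr B).
Proof. intros HAB HA; exact (der_mp _ _ _ _ (der_andl _ _ _ _ HAB) HA). Qed.

Ltac tr_intro := match goal with
  | |- derivable _ (map boxdot_tr ?L) _ => apply (der_tr_imp_intro L)
  | |- derivable _ [] _ => apply (der_tr_imp_intro [])
  end.

Lemma LC_thm_boxdot_tr A : LC_thm A -> iGL_prf X (tr A).
Proof.
  intro HA; apply der_nil.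
  induction HA as [A B | A B C | A B | A B | A B | A B | A B | A B C | A | A B | A | A
                  | A [B ->] | A B _ IHAB _ IHA | A _ IHA].
  - tr_intro; tr_intro; in_ctx.
  - tr_intro; tr_intro; tr_intro.
    apply (der_tr_imp_elim _ B); apply (der_tr_imp_elim _ A); in_ctx.
  - tr_intro; apply (der_andl _ _ _ (tr B)); in_ctx.
  - tr_intro; apply (der_andr _ _ (tr A)); in_ctx.
  - tr_intro; tr_intro; apply der_andI; in_ctx.
  - tr_intro; apply der_orl; in_ctx.
  - tr_intro; apply der_orr; in_ctx.
  - tr_intro; tr_intro; tr_intro; apply (der_orE _ _ (tr A) (tr B)); [in_ctx | |].
    + apply (der_tr_imp_elim _ A); in_ctx.
    + apply (der_tr_imp_elim _ B); in_ctx.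
  - tr_intro; apply der_efq; in_ctx.
  - tr_intro; tr_intro; apply (der_box _ [tr A; tr (Imp A B)]).
    + apply (der_tr_imp_elim _ A); in_ctx.
    + intros x [<- | [<- | []]]; in_ctx.
  - tr_intro; apply (der_app _ _ _ _ (ax_4 _ _)); in_ctx.
  - tr_intro; apply (der_app _ _ _ _ (ax_L _ _)).
    apply (der_box _ [tr (Imp (Box A) A)]).
    + apply (der_andl _ _ _ (Box (Imp (Box (tr A)) (tr A)))); in_ctx.
    + intros x [<- | []]; in_ctx.
  - tr_intro; apply (der_app _ _ _ _ (boxdot_tr_persistent B)); in_ctx.
  - exact (der_tr_imp_elim _ _ _ IHAB IHA).
  - apply der_thm, r_nec, der_nil, IHA.
Qed.

Hypothesis box_leivant : forall B, iGL_prf X (Imp (Box B) (Box (leivant B))).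

Definition tr_adequate (C : form) : Prop :=
  iGL_prf X (Imp (boxdot (leivant C)) (tr C)) /\
  iGL_prf X (Imp (tr C) C) /\
  (NOI C -> iGL_prf X (Imp C (tr C))).

Lemma der_box_tr G C :
  iGL_prf X (Imp (boxdot (leivant C)) (tr C)) -> der G (Box C) -> der G (Box (tr C)).
Proof.
  intros HC H; apply (der_box_mono _ _ _ _ HC), der_box_boxdot.
  exact (der_app _ _ _ _ (box_leivant C) H).
Qed.

Lemma tr_adequate_atomic p : atomic p -> tr_adequate p.
Proof.
  destruct p; intros []; (split; [|split]); try (intros; apply iGL_imp_refl);
    apply der_single_imp; eapply der_andl; in_ctx.
Qed.

Lemma tr_adequate_And A B : tr_adequate A -> tr_adequate B -> tr_adequate (And A B).
Proof.
  intros [QA [RA NA]] [QB [RB NB]]; split; [|split].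
  - apply der_single_imp; simpl.
    assert (Hl : der [boxdot (And (leivant A) (leivant B))] (And (leivant A) (leivant B)))
      by (apply der_andl with (Box (And (leivant A) (leivant B))); in_ctx).
    assert (Hb : der [boxdot (And (leivant A) (leivant B))] (Box (And (leivant A) (leivant B))))
      by (apply der_andr with (And (leivant A) (leivant B)); in_ctx).
    apply der_andI; [apply (der_app _ _ _ _ QA) | apply (der_app _ _ _ _ QB)];
      apply der_andI.
    + exact (der_andl _ _ _ _ Hl).
    + exact (der_box_mono _ _ _ _ (ax_and1 _ _ _) Hb).
    + exact (der_andr _ _ _ _ Hl).
    + exact (der_box_mono _ _ _ _ (ax_and2 _ _ _) Hb).
  - apply der_single_imp; simpl; apply der_andI.
    + apply (der_app _ _ _ _ RA), der_andl with (tr B); in_ctx.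
    + apply (der_app _ _ _ _ RB), der_andr with (tr A); in_ctx.
  - intro HN; apply andb_true_iff in HN as [HA HB].
    apply der_single_imp; simpl; apply der_andI.
    + apply (der_app _ _ _ _ (NA HA)), der_andl with B; in_ctx.
    + apply (der_app _ _ _ _ (NB HB)), der_andr with A; in_ctx.
Qed.

Lemma tr_adequate_Or A B : tr_adequate A -> tr_adequate B -> tr_adequate (Or A B).
Proof.
  intros [QA [RA NA]] [QB [RB NB]]; split; [|split].
  - apply der_single_imp; simpl.
    apply (der_orE _ _ (boxdot (leivant A)) (boxdot (leivant B))).
    + apply der_andl with (Box (Or (boxdot (leivant A)) (boxdot (leivant B)))); in_ctx.
    + apply der_orl, (der_app _ _ _ _ QA); in_ctx.
    + apply der_orr, (der_app _ _ _ _ QB); in_ctx.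
  - apply der_single_imp; simpl; apply (der_orE _ _ (tr A) (tr B)); [in_ctx | |].
    + apply der_orl, (der_app _ _ _ _ RA); in_ctx.
    + apply der_orr, (der_app _ _ _ _ RB); in_ctx.
  - intro HN; apply andb_true_iff in HN as [HA HB].
    apply der_single_imp; simpl; apply (der_orE _ _ A B); [in_ctx | |].
    + apply der_orl, (der_app _ _ _ _ (NA HA)); in_ctx.
    + apply der_orr, (der_app _ _ _ _ (NB HB)); in_ctx.
Qed.

Lemma tr_adequate_Box A : tr_adequate A -> tr_adequate (Box A).
Proof.
  intros [QA [RA _]]; split; [|split].
  - apply der_single_imp, (der_box_tr _ _ QA), der_andl with (Box (Box A)); in_ctx.
  - apply der_single_imp, (der_box_mono _ _ _ _ RA); in_ctx.
  - intros _; apply der_single_imp, (der_box_tr _ _ QA); in_ctx.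
Qed.

Lemma boxdot_imp_tr A B :
  iGL_prf X (Imp (tr A) A) -> iGL_prf X (Imp (boxdot (leivant B)) (tr B)) ->
  iGL_prf X (Imp (boxdot (Imp A (leivant B))) (Imp (tr A) (tr B))).
Proof.
  intros RA QB; apply der_single_imp, der_deduction.
  assert (HA : der [tr A; boxdot (Imp A (leivant B))] A)
    by (apply (der_app _ _ _ _ RA); in_ctx).
  assert (HbA : der [tr A; boxdot (Imp A (leivant B))] (Box A)).
  { apply (der_box_mono _ _ _ _ RA), (der_app _ _ _ _ (boxdot_tr_persistent A)); in_ctx. }
  apply (der_app _ _ _ _ QB), der_andI.
  - apply der_mp with A; [|exact HA].
    apply der_andl with (Box (Imp A (leivant B))); in_ctx.
  - apply der_mp with (Box A); [|exact HbA].
    apply der_mp with (Box (Imp A (leivant B))); [apply der_thm, ax_K|].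
    apply der_andr with (Imp A (leivant B)); in_ctx.
Qed.

Lemma tr_adequate_Imp A B :
  NOI A -> tr_adequate A -> tr_adequate B -> tr_adequate (Imp A B).
Proof.
  intros HN [_ [RA NA]] [QB [RB _]].
  pose proof (boxdot_imp_tr _ _ RA QB) as F.
  split; [|split].
  - unfold NOI in HN; simpl; rewrite HN.
    apply der_single_imp; apply der_andI.
    + apply (der_app _ _ _ _ F); in_ctx.
    + apply (der_box_mono _ _ _ _ F), der_box_boxdot.
      apply der_andr with (Imp A (leivant B)); in_ctx.
  - apply der_single_imp, der_deduction, (der_app _ _ _ _ RB).
    apply der_mp with (tr A).
    + apply der_andl with (Box (Imp (tr A) (tr B))); in_ctx.
    + apply (der_app _ _ _ _ (NA HN)); in_ctx.
  - discriminate.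
Qed.

Lemma TNNIL_tr_adequate C : TNNIL C -> tr_adequate C.
Proof.
  induction 1.
  - now apply tr_adequate_atomic.
  - now apply tr_adequate_atomic.
  - now apply tr_adequate_And.
  - now apply tr_adequate_Or.
  - now apply tr_adequate_Box.
  - now apply tr_adequate_Imp.
Qed.

End Translation.

Theorem theorem4p23 : forall A : form, TNNIL A -> LC_thm A -> LLe_plus_thm A.
Proof.
  intros A HT HA.
  assert (Hatom : forall p, atomic p -> LLe_plus_thm (Imp p (Box p)))
    by (intros p Hp; apply ax_extra; right; exists p; auto).
  assert (Hleiv : forall B, LLe_plus_thm (Imp (Box B) (Box (leivant B))))
    by (intro B; apply ax_extra; left; exists B; reflexivity).
  destruct (TNNIL_tr_adequate _ Hatom Hleiv A HT) as [_ [Hsound _]].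
  exact (r_mp _ _ _ Hsound (LC_thm_boxdot_tr _ Hatom A HA)).
Qed.
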